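(* Let $\alpha_a$ be a labeled dGL hybrid game. If $S$ is an inductive Angelic subvalue map for $\alpha_a$, then $\models S(a)\rightarrow\langle\alpha\rangle S(\mathsf{end})$. Dually, if $S$ is an inductive Demonic subvalue map for $\alpha_a$, then $\models S(a)\rightarrow[\alpha] S(\mathsf{end})$.
   Context: Differential game logic (dGL). Hybrid games are generated by $\alpha,\beta ::= x:=e \mid \alpha;\beta \mid ?Q \mid \{x'=f(x)\,\&\,Q\} \mid \alpha^{*} \mid \alpha\cup\beta \mid x:=* \mid\ !Q \mid \{x'=f(x)\,\&\,Q\}^{d} \mid \alpha^{\times} \mid \alpha\cap\beta \mid x:=\otimes$, with $x$ a real variable (vector for ODEs), $e,f(x)$ polynomial terms, $Q$ a formula. Players Angel and Demon: $x:=e$ deterministic assignment; in $x:=*$ Angel (in $x:=\otimes$ Demon) assigns any real to $x$; in $\{x'=f(x)\&Q\}$ Angel (in $\{\cdot\}^d$ Demon) chooses a duration $r\ge 0$ of following the ODE with $Q$ true throughout; $?Q$ makes Angel lose and $!Q$ makes Demon lose if $Q$ is false; in $\alpha\cup\beta$ Angel (in $\alpha\cap\beta$ Demon) chooses the branch; in $\alpha^*$ Angel (in $\alpha^\times$ Demon) decides before each iteration whether to repeat or stop; $\alpha;\beta$ sequential. Formulas: polynomial (in)equalities closed under connectives, real quantifiers, and modalities $\langle\alpha\rangle\varphi$ (Angel has a winning strategy in $\alpha$ to reach $\varphi$) and $[\alpha]\varphi\equiv\neg\langle\alpha\rangle\neg\varphi$ (Demon has one), with the standard dGL winning-region semantics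 ($\langle x:=*\rangle\varphi\leftrightarrow\exists x\varphi$, $\langle x:=\otimes\rangle\varphi\leftrightarrow\forall x\varphi$, $\langle ?Q\rangle\varphi\leftrightarrow Q\wedge\varphi$, $\langle !Q\rangle\varphi\leftrightarrow(Q\rightarrow\varphi)$, $\cup$ as disjunction, $\cap$ as conjunction, $\langle\alpha;\beta\rangle\varphi\leftrightarrow\langle\alpha\rangle\langle\beta\rangle\varphi$, Angel ODE existential and Demon ODE universal over durations/solutions staying in $Q$, $\langle\alpha^*\rangle$ least and $\langle\alpha^\times\rangle$ greatest fixed point). $\models$ denotes validity. Labels: every node of the syntax tree carries a unique label; $\alpha_a$ has root label $a$; $\mathrm{nodes}(\alpha_a)$ is its set of subgame labels; $\mathsf{end}$ is a special extra label. A map $S$ assigns formulas to a label set containing $\mathrm{nodes}(\alpha_a)\cup\{\mathsf{end}\}$; $S\{\mathsf{end}\mapsto Q\}$ replaces the value at $\mathsf{end}$. $\gamma_g,\delta_d$ denote immediate subgames with root labels $g,d$. Angelic existential projection $\mathcal{P}(\alpha_a,S)$: $(x:=* )_a\mapsto(x:=* )_a;?S(\mathsf{end})$; Angel ODE $\mapsto$ ODE$;?S(\mathsf{end})$; $(\gamma_g\cup\delta_d)_a\mapsto(?S(g);\mathcal{P}(\gamma_g,S))\cup(?S(d);\mathcal{P}(\delta_d,S))$; $((\gamma_g)^* )_a\mapsto(?S(g);\mathcal{P}(\gamma_g,S\{\mathsf{end}\mapsto S(a)\}))^*;?S(\mathsf{end})$; $(\gamma_g;\delta_d)_a\mapsto\mathcal{P}(\gamma_g,S\{\mathsf{end}\mapsto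 S(d)\});\mathcal{P}(\delta_d,S)$; $\cap\mapsto\mathcal{P}(\gamma_g,S)\cap\mathcal{P}(\delta_d,S)$; $((\gamma_g)^\times)_a\mapsto\mathcal{P}(\gamma_g,S\{\mathsf{end}\mapsto S(a)\})^\times$; other atomic games unchanged (labels preserved, new nodes fresh labels). Demonic existential projection $\mathcal{D}(\alpha_a,S)$: $(x:=\otimes)_a\mapsto(x:=\otimes)_a;!S(\mathsf{end})$; Demon ODE $\mapsto$ ODE$^d;!S(\mathsf{end})$; $(\gamma_g\cap\delta_d)_a\mapsto(!S(g);\mathcal{D}(\gamma_g,S))\cap(!S(d);\mathcal{D}(\delta_d,S))$; $((\gamma_g)^\times)_a\mapsto(!S(g);\mathcal{D}(\gamma_g,S\{\mathsf{end}\mapsto S(g)\vee S(\mathsf{end})\}))^\times;!S(\mathsf{end})$; $(\gamma_g;\delta_d)_a\mapsto\mathcal{D}(\gamma_g,S\{\mathsf{end}\mapsto S(d)\});\mathcal{D}(\delta_d,S)$; $\cup\mapsto\mathcal{D}(\gamma_g,S)\cup\mathcal{D}(\delta_d,S)$; $((\gamma_g)^* )_a\mapsto\mathcal{D}(\gamma_g,S\{\mathsf{end}\mapsto S(a)\})^*$; other atomic games unchanged. Inductive Angelic subvalue map ($S\Vdash\alpha_a$), recursively: atomic $\alpha$: $\models S(a)\rightarrow\langle\alpha\rangle S(\mathsf{end})$; $\cup$: $\models S(a)\rightarrow S(g)\vee S(d)$, $S\Vdash\gamma_g$, $S\Vdash\delta_d$; $\cap$: $\models S(a)\rightarrow S(g)\wedge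 S(d)$ and both; $;$: $\models S(a)\rightarrow S(g)$, $S\{\mathsf{end}\mapsto S(d)\}\Vdash\gamma_g$, $S\Vdash\delta_d$; $((\gamma_g)^* )_a$: $\models S(a)\rightarrow\langle\mathcal{P}(\alpha_a,S)\rangle S(\mathsf{end})$ and $S\{\mathsf{end}\mapsto S(a)\}\Vdash\gamma_g$; $((\gamma_g)^\times)_a$: $\models S(a)\rightarrow S(g)\wedge S(\mathsf{end})$ and $S\{\mathsf{end}\mapsto S(a)\}\Vdash\gamma_g$. Inductive Demonic subvalue map, recursively: atomic: $\models S(a)\rightarrow[\alpha]S(\mathsf{end})$; $\cup$: $\models S(a)\rightarrow S(g)\wedge S(d)$ and both subgames; $\cap$: $\models S(a)\rightarrow S(g)\vee S(d)$ and both; $;$: $\models S(a)\rightarrow S(g)$, $S\{\mathsf{end}\mapsto S(d)\}$ for $\gamma_g$, $S$ for $\delta_d$; $((\gamma_g)^* )_a$: $\models S(a)\rightarrow S(\mathsf{end})\wedge S(g)$ and $S\{\mathsf{end}\mapsto S(a)\}$ for $\gamma_g$; $((\gamma_g)^\times)_a$: $\models S(a)\rightarrow[\mathcal{D}(\alpha_a,S)]S(\mathsf{end})$ and $S\{\mathsf{end}\mapsto S(a)\}$ for $\gamma_g$. *)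

From Stdlib Require Import Reals List.
Import ListNotations.
Open Scope R_scope.

Definition var := nat.
Definition state := var -> R.
Definition upd (w : state) (x : var) (v : R) : state :=
  fun y => if Nat.eqb y x then v else w y.

(** Labels: user labels [LNode n], fresh labels [LFresh a k] created by the
    projections (the k-th new node introduced while projecting node [a]),
    and the special extra label [LEnd] ("end"). *)
Inductive lab : Type :=
| LNode  : nat -> lab
| LFresh : lab -> nat -> lab
| LEnd   : lab.

Inductive term : Type :=
| TVar   : var -> term
| TConst : R -> term
| TNeg   : term -> term
| TPlus  : term -> term -> term
| TTimes : term -> term -> term.

Fixpoint tsem (e : term) (w : state) : R :=
  match e with
  | TVar x => w x
  | TConst c => c
  | TNeg e1 => - tsem e1 w
  | TPlus e1 e2 => tsem e1 w + tsem e2 w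
  | TTimes e1 e2 => tsem e1 w * tsem e2 w
  end.

(** Formulas and labeled hybrid games (every game node carries a label,
    its first argument). An ODE {x1'=f1,...,xn'=fn & Q} is given by the
    list of pairs (xi, fi). *)
Inductive formula : Type :=
| FGe     : term -> term -> formula
| FGt     : term -> term -> formula
| FEq     : term -> term -> formula
| FTrue   : formula
| FFalse  : formula
| FNot    : formula -> formula
| FAnd    : formula -> formula -> formula
| FOr     : formula -> formula -> formula
| FImp    : formula -> formula -> formula
| FForall : var -> formula -> formula
| FExists : var -> formula -> formula
| FDia    : game -> formula -> formula
with game : Type :=
| GAssign  : lab -> var -> term -> game
| GSeq     : lab -> game -> game -> game
| GTest    : lab -> formula -> game
| GODE     : lab -> list (var * term) -> formula -> game
| GStar    : lab -> game -> game
| GChoice  : lab -> game -> game -> game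
| GAnyA    : lab -> var -> game
| GDTest   : lab -> formula -> game
| GDODE    : lab -> list (var * term) -> formula -> game
| GCross   : lab -> game -> game
| GDChoice : lab -> game -> game -> game
| GAnyD    : lab -> var -> game.

Definition FBox (a : game) (p : formula) : formula := FNot (FDia a (FNot p)).

Definition root (a : game) : lab :=
  match a with
  | GAssign l _ _ | GSeq l _ _ | GTest l _ | GODE l _ _ | GStar l _
  | GChoice l _ _ | GAnyA l _ | GDTest l _ | GDODE l _ _ | GCross l _
  | GDChoice l _ _ | GAnyD l _ => l
  end.

(** Labels of all subgames (the syntax tree of the game; formulas inside
    tests / domains are not game nodes). *)
Fixpoint nodes (a : game) : list lab :=
  match a with
  | GSeq l g d | GChoice l g d | GDChoice l g d => l :: nodes g ++ nodes d
  | GStar l g | GCross l g => l :: nodes g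
  | _ => [root a]
  end.

Definition well_labeled (a : game) : Prop :=
  NoDup (nodes a) /\ forall l, In l (nodes a) -> exists n, l = LNode n.

(** Derivative of f at t within the interval [lo, hi] (one-sided at the
    endpoints; vacuous when lo = hi). *)
Definition deriv_within (lo hi : R) (f : R -> R) (t v : R) : Prop :=
  forall eps, eps > 0 -> exists delta, delta > 0 /\
    forall s, lo <= s <= hi -> s <> t -> Rabs (s - t) < delta ->
      Rabs ((f s - f t) / (s - t) - v) < eps.

Definition ode_sol (xs : list (var * term)) (Q : state -> Prop) (w : state)
  (r : R) (phi : R -> state) : Prop :=
  0 <= r /\
  (forall y, phi 0 y = w y) /\
  (forall t y, 0 <= t <= r -> ~ In y (map fst xs) -> phi t y = w y) /\
  (forall t, 0 <= t <= r -> Q (phi t)) /\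
  (forall x f t, In (x, f) xs -> 0 <= t <= r ->
     deriv_within 0 r (fun s => phi s x) t (tsem f (phi t))).

(** Semantics: [fsem p] = set of states where p is true;
    [gsem a X] = Angel's winning region of game a for goal X. *)
Fixpoint fsem (p : formula) (w : state) {struct p} : Prop :=
  match p with
  | FGe e1 e2 => tsem e1 w >= tsem e2 w
  | FGt e1 e2 => tsem e1 w > tsem e2 w
  | FEq e1 e2 => tsem e1 w = tsem e2 w
  | FTrue => True
  | FFalse => False
  | FNot q => ~ fsem q w
  | FAnd q1 q2 => fsem q1 w /\ fsem q2 w
  | FOr q1 q2 => fsem q1 w \/ fsem q2 w
  | FImp q1 q2 => fsem q1 w -> fsem q2 w
  | FForall x q => forall v, fsem q (upd w x v)
  | FExists x q => exists v, fsem q (upd w x v)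
  | FDia a q => gsem a (fsem q) w
  end
with gsem (a : game) (X : state -> Prop) (w : state) {struct a} : Prop :=
  match a with
  | GAssign _ x e => X (upd w x (tsem e w))
  | GSeq _ g d => gsem g (gsem d X) w
  | GTest _ q => fsem q w /\ X w
  | GODE _ xs q => exists r phi, ode_sol xs (fsem q) w r phi /\ X (phi r)
  | GStar _ g =>      (* least fixed point of Z |-> X u gsem g Z *)
      forall Z : state -> Prop, (forall v, X v \/ gsem g Z v -> Z v) -> Z w
  | GChoice _ g d => gsem g X w \/ gsem d X w
  | GAnyA _ x => exists v, X (upd w x v)
  | GDTest _ q => fsem q w -> X w
  | GDODE _ xs q => forall r phi, ode_sol xs (fsem q) w r phi -> X (phi r)
  | GCross _ g =>     (* greatest fixed point of Z |-> X n gsem g Z *)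
      exists Z : state -> Prop, (forall v, Z v -> X v /\ gsem g Z v) /\ Z w
  | GDChoice _ g d => gsem g X w /\ gsem d X w
  | GAnyD _ x => forall v, X (upd w x v)
  end.

Definition valid (p : formula) : Prop := forall w : state, fsem p w.

Definition lmap := lab -> formula.
Definition updEnd (S : lmap) (Q : formula) : lmap :=
  fun l => match l with LEnd => Q | _ => S l end.

Fixpoint aproj (a : game) (S : lmap) {struct a} : game :=
  match a with
  | GAnyA l x => GSeq (LFresh l 0) (GAnyA l x) (GTest (LFresh l 1) (S LEnd))
  | GODE l xs q => GSeq (LFresh l 0) (GODE l xs q) (GTest (LFresh l 1) (S LEnd))
  | GChoice l g d =>
      GChoice l (GSeq (LFresh l 0) (GTest (LFresh l 1) (S (root g))) (aproj g S))
                (GSeq (LFresh l 2) (GTest (LFresh l 3) (S (root d))) (aproj d S))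
  | GStar l g =>
      GSeq (LFresh l 0)
        (GStar l (GSeq (LFresh l 1) (GTest (LFresh l 2) (S (root g)))
                       (aproj g (updEnd S (S l)))))
        (GTest (LFresh l 3) (S LEnd))
  | GSeq l g d => GSeq l (aproj g (updEnd S (S (root d)))) (aproj d S)
  | GDChoice l g d => GDChoice l (aproj g S) (aproj d S)
  | GCross l g => GCross l (aproj g (updEnd S (S l)))
  | _ => a
  end.

Fixpoint dproj (a : game) (S : lmap) {struct a} : game :=
  match a with
  | GAnyD l x => GSeq (LFresh l 0) (GAnyD l x) (GDTest (LFresh l 1) (S LEnd))
  | GDODE l xs q => GSeq (LFresh l 0) (GDODE l xs q) (GDTest (LFresh l 1) (S LEnd))
  | GDChoice l g d =>
      GDChoice l (GSeq (LFresh l 0) (GDTest (LFresh l 1) (S (root g))) (dproj g S))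
                 (GSeq (LFresh l 2) (GDTest (LFresh l 3) (S (root d))) (dproj d S))
  | GCross l g =>
      GSeq (LFresh l 0)
        (GCross l (GSeq (LFresh l 1) (GDTest (LFresh l 2) (S (root g)))
                        (dproj g (updEnd S (FOr (S (root g)) (S LEnd))))))
        (GDTest (LFresh l 3) (S LEnd))
  | GSeq l g d => GSeq l (dproj g (updEnd S (S (root d)))) (dproj d S)
  | GChoice l g d => GChoice l (dproj g S) (dproj d S)
  | GStar l g => GStar l (dproj g (updEnd S (S l)))
  | _ => a
  end.

Fixpoint angel_sub (S : lmap) (a : game) {struct a} : Prop :=
  match a with
  | GChoice l g d =>
      valid (FImp (S l) (FOr (S (root g)) (S (root d)))) /\
      angel_sub S g /\ angel_sub S d
  | GDChoice l g d =>
      valid (FImp (S l) (FAnd (S (root g)) (S (root d)))) /\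
      angel_sub S g /\ angel_sub S d
  | GSeq l g d =>
      valid (FImp (S l) (S (root g))) /\
      angel_sub (updEnd S (S (root d))) g /\ angel_sub S d
  | GStar l g =>
      valid (FImp (S l) (FDia (aproj a S) (S LEnd))) /\
      angel_sub (updEnd S (S l)) g
  | GCross l g =>
      valid (FImp (S l) (FAnd (S (root g)) (S LEnd))) /\
      angel_sub (updEnd S (S l)) g
  | _ => valid (FImp (S (root a)) (FDia a (S LEnd)))
  end.

Fixpoint demon_sub (S : lmap) (a : game) {struct a} : Prop :=
  match a with
  | GChoice l g d =>
      valid (FImp (S l) (FAnd (S (root g)) (S (root d)))) /\
      demon_sub S g /\ demon_sub S d
  | GDChoice l g d =>
      valid (FImp (S l) (FOr (S (root g)) (S (root d)))) /\
      demon_sub S g /\ demon_sub S d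
  | GSeq l g d =>
      valid (FImp (S l) (S (root g))) /\
      demon_sub (updEnd S (S (root d))) g /\ demon_sub S d
  | GStar l g =>
      valid (FImp (S l) (FAnd (S LEnd) (S (root g)))) /\
      demon_sub (updEnd S (S l)) g
  | GCross l g =>
      valid (FImp (S l) (FBox (dproj a S) (S LEnd))) /\
      demon_sub (updEnd S (S l)) g
  | _ => valid (FImp (S (root a)) (FBox a (S LEnd)))
  end.

(* Soundness of inductive subvalue maps is a structural induction on the game: each
   clause of the subvalue condition is exactly the local obligation for its node, with
   S(end) updated to the successor's formula.  The loop clauses reduce to two facts.
   A loop owned by the opponent is handled by its invariant S(a): S(a) itself witnesses
   Angel's greatest fixed point for x, and its complement is a prefixed point refuting
   Angel's least fixed point for *.  A loop owned by the player is discharged by the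
   existential projection, which only adds tests against the player: winning the
   projected game P(alpha) suffices for Angel in alpha, and Demon winning D(alpha)
   suffices for Demon in alpha. *)

From Stdlib Require Import Reals List.

Lemma gsem_mono (a : game) (X Y : state -> Prop) :
  (forall v, X v -> Y v) -> forall w, gsem a X w -> gsem a Y w.
Proof.
  revert X Y; induction a; intros X Y HXY w H; simpl in *.
  - auto.
  - eapply IHa1; [|exact H]. intros v; apply IHa2; exact HXY.
  - destruct H; split; auto.
  - destruct H as [r [phi [Hsol HX]]]; exists r, phi; auto.
  - intros Z HZ. apply H. intros v [Hv|Hv]; apply HZ; auto.
  - destruct H as [H|H]; [left; eapply IHa1 | right; eapply IHa2]; eauto.
  - destruct H as [u Hu]; exists u; auto.
  - auto.
  - intros r phi Hsol; auto.
  - destruct H as [Z [HZ Hw]]; exists Z; split; [|exact Hw].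
    intros v Hv; destruct (HZ v Hv); auto.
  - destruct H; split; [eapply IHa1 | eapply IHa2]; eauto.
  - auto.
Qed.

Lemma gsem_star_fold (l : lab) (g : game) (X : state -> Prop) (w : state) :
  X w \/ gsem g (gsem (GStar l g) X) w -> gsem (GStar l g) X w.
Proof.
  intros H Z HZ. apply HZ. destruct H as [H|H]; [left; exact H | right].
  eapply gsem_mono; [|exact H]. intros v Hv; exact (Hv Z HZ).
Qed.

Lemma gsem_aproj (a : game) (S : lmap) (X : state -> Prop) (w : state) :
  gsem (aproj a S) X w -> gsem a X w.
Proof.
  revert S X w; induction a; intros S X w H; simpl in *; auto.
  - eapply gsem_mono; [|eapply IHa1; exact H]. intros v Hv; eapply IHa2; exact Hv.
  - destruct H as [r [phi [Hsol [_ HX]]]]; exists r, phi; auto.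
  - apply (H (gsem (GStar l a) X)).
    intros v [[_ Hv]|[_ Hv]]; apply gsem_star_fold; [left; exact Hv | right].
    eapply IHa; exact Hv.
  - destruct H as [[_ H]|[_ H]]; [left; eapply IHa1 | right; eapply IHa2]; eauto.
  - destruct H as [u [_ Hu]]; exists u; exact Hu.
  - destruct H as [Z [HZ Hw]]; exists Z; split; [|exact Hw].
    intros v Hv; destruct (HZ v Hv); split; [|eapply IHa]; eauto.
  - destruct H; split; [eapply IHa1 | eapply IHa2]; eauto.
Qed.

Lemma gsem_dproj (a : game) (S : lmap) (X : state -> Prop) (w : state) :
  gsem a X w -> gsem (dproj a S) X w.
Proof.
  revert S X w; induction a; intros S X w H; simpl in *; auto.
  - eapply IHa1. eapply gsem_mono; [|exact H]. intros v Hv; eapply IHa2; exact Hv.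
  - intros Z HZ. apply H. intros v [Hv|Hv]; apply HZ; [left; exact Hv | right].
    eapply IHa; exact Hv.
  - destruct H as [H|H]; [left; eapply IHa1 | right; eapply IHa2]; eauto.
  - destruct H as [Z [HZ Hw]]; exists Z; split; [|exact Hw].
    intros v Hv; destruct (HZ v Hv); split; auto.
  - destruct H; split; intros _; [eapply IHa1 | eapply IHa2]; eauto.
Qed.

Lemma updEnd_root (S : lmap) (Q : formula) (a : game) :
  ~ In LEnd (nodes a) -> updEnd S Q (root a) = S (root a).
Proof.
  intros Hend. assert (Hroot : root a <> LEnd).
  { intros E. apply Hend. rewrite <- E. destruct a; left; reflexivity. }
  destruct (root a); [reflexivity | reflexivity | contradiction].
Qed.

Lemma angel_sub_sound (a : game) (S : lmap) :
  ~ In LEnd (nodes a) -> angel_sub S a ->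
  valid (FImp (S (root a)) (FDia a (S LEnd))).
Proof.
  revert S; induction a; intros S Hend HS; try exact HS;
    simpl in Hend, HS; rewrite ?in_app_iff in Hend; intros w Hw; simpl in Hw |- *.
  - destruct HS as [Hroot [Hg Hd]].
    assert (Hw1 := IHa1 _ ltac:(tauto) Hg w).
    simpl in Hw1; rewrite updEnd_root in Hw1 by tauto.
    eapply gsem_mono; [|exact (Hw1 (Hroot w Hw))].
    intros v Hv; exact (IHa2 S ltac:(tauto) Hd v Hv).
  - destruct HS as [Hproj _]. exact (gsem_aproj (GStar l a) S _ w (Hproj w Hw)).
  - destruct HS as [Hroot [Hg Hd]].
    destruct (Hroot w Hw) as [H|H]; [left; apply IHa1 | right; apply IHa2]; auto; tauto.
  - destruct HS as [Hinv Hg].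
    exists (fsem (S l)); split; [|exact Hw].
    intros v Hv. destruct (Hinv v Hv) as [Hgv Hend_v]; split; [exact Hend_v|].
    assert (Hv1 := IHa _ ltac:(tauto) Hg v).
    simpl in Hv1; rewrite updEnd_root in Hv1 by tauto.
    exact (Hv1 Hgv).
  - destruct HS as [Hroot [Hg Hd]].
    destruct (Hroot w Hw) as [Hgw Hdw]; split; [apply IHa1 | apply IHa2]; auto; tauto.
Qed.

Lemma demon_sub_sound (a : game) (S : lmap) :
  ~ In LEnd (nodes a) -> demon_sub S a ->
  valid (FImp (S (root a)) (FBox a (S LEnd))).
Proof.
  revert S; induction a; intros S Hend HS; try exact HS;
    simpl in Hend, HS; rewrite ?in_app_iff in Hend; intros w Hw; simpl in Hw |- *.
  - destruct HS as [Hroot [Hg Hd]].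
    assert (Hw1 := IHa1 _ ltac:(tauto) Hg w).
    simpl in Hw1; rewrite updEnd_root in Hw1 by tauto.
    intros H. apply (Hw1 (Hroot w Hw)).
    eapply gsem_mono; [|exact H].
    intros v Hv Hdv; exact (IHa2 S ltac:(tauto) Hd v Hdv Hv).
  - destruct HS as [Hinv Hg].
    intros H. apply (H (fun v => ~ fsem (S l) v)); [|exact Hw].
    intros v [Hv|Hv] Hl; destruct (Hinv v Hl) as [Hend_v Hgv]; [contradiction|].
    assert (Hv1 := IHa _ ltac:(tauto) Hg v).
    simpl in Hv1; rewrite updEnd_root in Hv1 by tauto.
    exact (Hv1 Hgv Hv).
  - destruct HS as [Hroot [Hg Hd]].
    destruct (Hroot w Hw) as [Hgw Hdw]; intros [H|H];
      [eapply IHa1 | eapply IHa2]; eauto; tauto.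
  - destruct HS as [Hproj _]. intros H.
    exact (Hproj w Hw (gsem_dproj (GCross l a) S _ w H)).
  - destruct HS as [Hroot [Hg Hd]].
    destruct (Hroot w Hw) as [H|H]; intros [Hl Hr];
      [eapply IHa1 | eapply IHa2]; eauto; tauto.
Qed.

Theorem mainTheorem4 (alpha : game) (S : lmap) :
  well_labeled alpha ->
  (angel_sub S alpha -> valid (FImp (S (root alpha)) (FDia alpha (S LEnd)))) /\
  (demon_sub S alpha -> valid (FImp (S (root alpha)) (FBox alpha (S LEnd)))).
Proof.
  intros [_ Huser].
  assert (Hend : ~ In LEnd (nodes alpha)).
  { intros Hin. destruct (Huser LEnd Hin) as [n E]. discriminate E. }
  split; intros HS.
  - exact (angel_sub_sound alpha S Hend HS).
  - exact (demon_sub_sound alpha S Hend HS).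
Qed.
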